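(* Let $(V,\le,\preccurlyeq)$ be a mixed lattice vector space equipped with a vector topology $\tau$. Consider: (a) $\tau$ is locally symmetric-solid; (b) $\tau$ is locally $(\le)$-full and the mixed lattice operations are continuous at zero; (c) the mixed lattice operations $(x,y)\mapsto x\curlyvee y$ and $(x,y)\mapsto x\curlywedge y$ are uniformly continuous; (d) $\tau$ is locally mixed-full and the mixed lattice operations are continuous at zero. Then (a) and (b) are equivalent, each of them implies (c), and (c) implies (d).
   Context: A mixed lattice vector space $(V,\le,\preccurlyeq)$ is a real vector space $V$ with two partial orderings $\le$ (initial order) and $\preccurlyeq$ (specific order), each making $V$ a partially ordered vector space, with positive cones $V_p=\{x:0\le x\}$, $V_{sp}=\{x:0\preccurlyeq x\}$, such that: (1) for all $x,y$ the elements $x\curlyvee y=\min\{w: w\succcurlyeq x,\ w\ge y\}$ and $x\curlywedge y=\max\{w: w\preccurlyeq x,\ w\le y\}$ exist (min/max with respect to $\le$); (2) $x\preccurlyeq y$ implies $x\le y$; (3) $x\curlyvee y, x\curlywedge y\in V_{sp}$ whenever $x,y\in V_{sp}$. The mixed lattice operations are $(x,y)\mapsto x\curlyvee y$ and $(x,y)\mapsto x\curlywedge y$; ''continuous at zero'' means continuous at $(0,0)$. Notation: $x^u=0\curlyvee x$, $x^l=0\curlyvee(-x)$, $s(x)=x^u+x^l$. A set $A$ is symmetric-solid if $x\in A$ and $s(y)\le s(x)$ imply $y\in A$; it is $(\le)$-full if $x,y\in A$ and $y\le z\le x$ imply $z\in A$. $\tau$ is locally symmetric-solid (resp. locally $(\le)$-full)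 if it has a base of neighborhoods of zero consisting of symmetric-solid (resp. $(\le)$-full) sets. $\tau$ is locally mixed-full if every neighborhood of zero contains a neighborhood $W$ of zero such that $y\in W$ and $0\preccurlyeq x\le y$ imply $x\in W$. Uniform continuity of $g:V\times V\to V$: for each neighborhood $W$ of $0$ there is a neighborhood $U$ of $0$ such that $x-x'\in U$, $y-y'\in U$ imply $g(x,y)-g(x',y')\in W$. *)

From HB Require Import structures.
From mathcomp Require Import all_boot all_order all_algebra.
From mathcomp Require Import all_classical all_reals all_analysis.
Set Implicit Arguments. Unset Strict Implicit. Unset Printing Implicit Defensive.
Import Order.TTheory GRing.Theory Num.Theory.
Local Open Scope classical_set_scope.
Local Open Scope ring_scope.

Section MixedLattice.
Variables (R : realType) (V : lmodType R).
Variables (le sle : V -> V -> Prop) (mj mm : V -> V -> V).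

Definition ordered_vs (r : V -> V -> Prop) : Prop :=
  [/\ (forall x, r x x),
      (forall x y, r x y -> r y x -> x = y),
      (forall x y z, r x y -> r y z -> r x z),
      (forall x y z, r x y -> r (x + z) (y + z)) &
      (forall (a : R) x y, 0 <= a -> r x y -> r (a *: x) (a *: y))].

(* mj x y = x curlyvee y = min_{le} {w | x <<= w, y <= w}
   mm x y = x curlywedge y = max_{le} {w | w <<= x, w <= y}
   (these are unique when they exist, by antisymmetry of le) *)
Definition mixed_lattice_vs : Prop :=
  [/\ ordered_vs le /\ ordered_vs sle,
      (forall x y, [/\ sle x (mj x y), le y (mj x y) &
                     forall w, sle x w -> le y w -> le (mj x y) w]),
      (forall x y, [/\ sle (mm x y) x, le (mm x y) y &
                     forall w, sle w x -> le w y -> le w (mm x y)]),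
      (forall x y, sle x y -> le x y) &
      (forall x y, sle 0 x -> sle 0 y -> sle 0 (mj x y) /\ sle 0 (mm x y))].

Definition ml_s (x : V) : V := mj 0 x + mj 0 (- x).

Definition symmetric_solid (A : set V) : Prop :=
  forall x y, A x -> le (ml_s y) (ml_s x) -> A y.

Definition le_full (A : set V) : Prop :=
  forall x y z, A x -> A y -> le y z -> le z x -> A z.

Definition mixed_full (W : set V) : Prop :=
  forall x y, W y -> sle 0 x -> le x y -> W x.
End MixedLattice.

Section Topo.
Variables (R : realType) (V : topologicalLmodType R).

Definition locally_P (P : set V -> Prop) : Prop :=
  forall U, nbhs (0 : V) U -> exists W, [/\ nbhs (0 : V) W, P W & W `<=` U].

Definition cont_at_zero (g : V -> V -> V) : Prop :=
  {for ((0 : V), (0 : V)), continuous (fun p : V * V => g p.1 p.2)}.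

Definition unif_cont2 (g : V -> V -> V) : Prop :=
  forall W, nbhs (0 : V) W -> exists U, nbhs (0 : V) U /\
    forall x x' y y', U (x - x') -> U (y - y') -> W (g x y - g x' y').
End Topo.

From HB Require Import structures.
From mathcomp Require Import all_boot all_order all_algebra.
From mathcomp Require Import all_classical all_reals all_analysis.
Import Order.TTheory GRing.Theory Num.Theory.
Local Open Scope classical_set_scope.
Local Open Scope ring_scope.
Set Implicit Arguments. Unset Strict Implicit.

(* Everything is controlled by s = x^u + x^l.  For g = ⋎ or ⋏ and t = s d + s e,
     d - t <= g (x + d) (y + e) - g x y <= d + t,
   so both operations are uniformly continuous as soon as tau is locally
   (<=)-full and s is continuous at 0.  Each of (a), (b) yields these two
   properties: a symmetric-solid set contains s x together with x, and s is
   built from ⋎.  Conversely, the (<=)-full hull of a small symmetric-solid set,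
   resp. the symmetric-solid hull of s^-1(G) for a small (<=)-full G, is again
   small.  Finally, 0 ≼ x <= y gives x ⋏ y - x ⋏ 0 = x, so uniform continuity
   of ⋏ keeps the mixed-full hull of a small set small. *)

Section OrderedVectorSpace.
Variables (R : realType) (V : lmodType R) (r : V -> V -> Prop).
Hypothesis ovs : ordered_vs r.

Lemma ovs_refl x : r x x. Proof. by case: ovs. Qed.

Lemma ovs_anti x y : r x y -> r y x -> x = y.
Proof. by case: ovs => _ anti _ _ _; apply: anti. Qed.

Lemma ovs_trans y x z : r x y -> r y z -> r x z.
Proof. by case: ovs => _ _ trans _ _; apply: trans. Qed.

Lemma ovs_addr z x y : r x y -> r (x + z) (y + z).
Proof. by case: ovs => _ _ _ addr _; apply: addr. Qed.

Lemma ovs_addl z x y : r x y -> r (z + x) (z + y).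
Proof. by rewrite ![z + _]addrC; apply: ovs_addr. Qed.

Lemma ovs_add x y x' y' : r x y -> r x' y' -> r (x + x') (y + y').
Proof. by move=> /(ovs_addr x') + /(ovs_addl y); apply: ovs_trans. Qed.

Lemma ovs_addr_ge0 x t : r 0 t -> r x (x + t).
Proof. by move/(ovs_addl x); rewrite addr0. Qed.

Lemma ovs_add_ge0 x y : r 0 x -> r 0 y -> r 0 (x + y).
Proof. by move=> x_ge0 /(ovs_addr_ge0 x); apply: ovs_trans. Qed.

Lemma ovs_opp x y : r x y -> r (- y) (- x).
Proof. by move/(ovs_addr (- x - y)); rewrite addrA subrr add0r addrCA subrr addr0. Qed.

Lemma ovs_subl_addr x y z : r (x - z) y <-> r x (y + z).
Proof.
split; first by move/(ovs_addr z); rewrite subrK.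
by move/(ovs_addr (- z)); rewrite addrK.
Qed.

Lemma ovs_subC x y z : r (x - z) y <-> r (x - y) z.
Proof. by rewrite !ovs_subl_addr addrC. Qed.

Definition le_full_hull (A : set V) : set V :=
  [set z | exists x y, [/\ A x, A y, r y z & r z x]].

Lemma sub_le_full_hull A : A `<=` le_full_hull A.
Proof. by move=> x Ax; exists x, x; split => //; apply: ovs_refl. Qed.

Lemma le_full_hull_le_full A : le_full r (le_full_hull A).
Proof.
move=> u v z [x [_ [Ax _ _ leux]]] [_ [y [_ Ay leyv _]]] levz lezu.
by exists x, y; split => //; [apply: ovs_trans leyv levz|apply: ovs_trans lezu leux].
Qed.

End OrderedVectorSpace.

Section MixedLattice.
Variables (R : realType) (V : lmodType R) (le sle : V -> V -> Prop).
Variables (mj mm : V -> V -> V).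
Hypothesis ml : mixed_lattice_vs le sle mj mm.

Let le_ovs : ordered_vs le. Proof. by case: ml => -[]. Qed.
Let sle_ovs : ordered_vs sle. Proof. by case: ml => -[]. Qed.
Let sle_le x y : sle x y -> le x y. Proof. by case: ml => _ _ _ + _; apply. Qed.

Lemma mj_ubl x y : sle x (mj x y). Proof. by case: ml => _ /(_ x y) []. Qed.
Lemma mj_ubr x y : le y (mj x y). Proof. by case: ml => _ /(_ x y) []. Qed.
Lemma mj_lub x y w : sle x w -> le y w -> le (mj x y) w.
Proof. by case: ml => _ /(_ x y) [_ _ lub] _ _ _; apply: lub. Qed.

Lemma mm_lbl x y : sle (mm x y) x. Proof. by case: ml => _ _ /(_ x y) []. Qed.
Lemma mm_lbr x y : le (mm x y) y. Proof. by case: ml => _ _ /(_ x y) []. Qed.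
Lemma mm_glb x y w : sle w x -> le w y -> le w (mm x y).
Proof. by case: ml => _ _ /(_ x y) [_ _ glb] _ _; apply: glb. Qed.

Lemma mj00 : mj 0 0 = 0.
Proof.
by apply: (ovs_anti le_ovs); [apply: mj_lub|apply: sle_le; apply: mj_ubl]; apply: ovs_refl.
Qed.

Lemma mm00 : mm 0 0 = 0.
Proof. by apply: (ovs_anti le_ovs); [apply: mm_lbr|apply: mm_glb]; apply: ovs_refl. Qed.

Lemma mm_idl x y : le x y -> mm x y = x.
Proof.
move=> lexy; apply: (ovs_anti le_ovs); first exact/sle_le/mm_lbl.
by apply: mm_glb => //; apply: ovs_refl.
Qed.

Lemma mmx0 x : sle 0 x -> mm x 0 = 0.
Proof.
move=> x_sge0; apply: (ovs_anti le_ovs); first exact: mm_lbr.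
by apply: mm_glb => //; apply: ovs_refl.
Qed.

Lemma mj0_ge0 x : le 0 (mj 0 x). Proof. exact/sle_le/mj_ubl. Qed.

Lemma mj0_le2 x y : le x y -> le (mj 0 x) (mj 0 y).
Proof.
by move=> lexy; apply: mj_lub; [apply: mj_ubl|apply: (ovs_trans le_ovs lexy (mj_ubr _ _))].
Qed.

Local Notation s := (ml_s mj).

Lemma ml_s_sge0 x : sle 0 (s x).
Proof. by apply: ovs_add_ge0 => //; apply: mj_ubl. Qed.

Lemma ml_s_ge0 x : le 0 (s x). Proof. exact/sle_le/ml_s_sge0. Qed.

Lemma ml_s_ge x : le x (s x).
Proof. by rewrite -{1}[x]addr0; apply: ovs_add => //; [apply: mj_ubr|apply: mj0_ge0]. Qed.

Lemma ml_sN x : s (- x) = s x. Proof. by rewrite /ml_s opprK addrC. Qed.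

Lemma ml_s_geN x : le (- x) (s x). Proof. by rewrite -ml_sN; apply: ml_s_ge. Qed.

Lemma ml_s_id p : sle 0 p -> s p = p.
Proof.
move=> p_sge0; have mj0p : mj 0 p = p.
  by apply: (ovs_anti le_ovs); [apply: mj_lub|apply: mj_ubr]; last apply: ovs_refl.
have mj0Np : mj 0 (- p) = 0.
  apply: (ovs_anti le_ovs); last exact: mj0_ge0.
  apply: mj_lub; first exact: ovs_refl.
  by rewrite -oppr0; apply: (ovs_opp le_ovs); apply: sle_le.
by rewrite /ml_s mj0p mj0Np addr0.
Qed.

Lemma ml_s0 : s 0 = 0. Proof. by apply: ml_s_id; apply: ovs_refl. Qed.

Lemma ml_s_le_between x y z : le y z -> le z x -> le (s z) (s x + s y).
Proof.
move=> leyz lezx; apply: ovs_add => //.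
  apply: (ovs_trans le_ovs (mj0_le2 lezx)); apply: ovs_addr_ge0 => //; exact: mj0_ge0.
apply: (ovs_trans le_ovs (mj0_le2 (ovs_opp le_ovs leyz))).
by rewrite /ml_s addrC; apply: ovs_addr_ge0 => //; exact: mj0_ge0.
Qed.

Definition ml_increment_bounded (g : V -> V -> V) : Prop :=
  forall x y d e, le (g (x + d) (y + e) - g x y) (d + (s d + s e)).

Lemma increment_bound_sge d e : sle d (d + (s d + s e)).
Proof.
by apply: ovs_addr_ge0 => //; apply: ovs_add_ge0 => //; apply: ml_s_sge0.
Qed.

Lemma increment_bound_ge d e : le e (d + (s d + s e)).
Proof.
rewrite addrA -{1}[e]add0r; apply: ovs_add => //; last exact: ml_s_ge.
by rewrite -(subrr d); apply: ovs_addl => //; apply: ml_s_geN.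
Qed.

Lemma mj_increment_bounded : ml_increment_bounded mj.
Proof.
move=> x y d e; apply/(ovs_subl_addr le_ovs); rewrite [_ + mj x y]addrC.
apply: mj_lub; apply: ovs_add => //.
- exact: mj_ubl.
- exact: increment_bound_sge.
- exact: mj_ubr.
- exact: increment_bound_ge.
Qed.

Lemma mm_increment_bounded : ml_increment_bounded mm.
Proof.
move=> x y d e; apply/(ovs_subC le_ovs); apply: mm_glb.
- rewrite -[X in sle _ X](addrK d); apply: ovs_add => //; first exact: mm_lbl.
  by apply: ovs_opp => //; apply: increment_bound_sge.
- rewrite -[X in le _ X](addrK e); apply: ovs_add => //; first exact: mm_lbr.
  by apply: ovs_opp => //; apply: increment_bound_ge.
Qed.

Lemma increment_lower_bound g x y d e : ml_increment_bounded g ->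
  le (d - (s d + s e)) (g (x + d) (y + e) - g x y).
Proof.
move=> /(_ (x + d) (y + e) (- d) (- e)); rewrite !addrK !ml_sN => /(ovs_opp le_ovs).
by rewrite opprB opprD opprK addrC.
Qed.

Lemma symmetric_solid_ml_s A x : symmetric_solid le mj A -> A x -> A (s x).
Proof.
move=> ssA Ax; apply: (ssA _ _ Ax).
by rewrite ml_s_id; [apply: (ovs_refl le_ovs)|apply: ml_s_sge0].
Qed.

Lemma le_full_hull_sub A B : symmetric_solid le mj A -> symmetric_solid le mj B ->
  (forall a b, A a -> A b -> B (a + b)) -> le_full_hull le A `<=` B.
Proof.
move=> ssA ssB AAB z [x [y [Ax Ay leyz lezx]]].
apply: (ssB (s x + s y)); first by apply: AAB; apply: symmetric_solid_ml_s.
rewrite [s (_ + _)]ml_s_id; first exact: ml_s_le_between.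
by apply: ovs_add_ge0 => //; apply: ml_s_sge0.
Qed.

Definition symmetric_solid_hull (A : set V) : set V :=
  [set y | exists2 x, A x & le (s y) (s x)].

Lemma sub_symmetric_solid_hull A : A `<=` symmetric_solid_hull A.
Proof. by move=> x Ax; exists x => //; exact: (ovs_refl le_ovs). Qed.

Lemma symmetric_solid_hull_symmetric_solid A :
  symmetric_solid le mj (symmetric_solid_hull A).
Proof. by move=> x y [z Az lexz] leyx; exists z => //; apply: (ovs_trans le_ovs leyx). Qed.

End MixedLattice.

Section TopologicalZmodule.
Variable V : topologicalZmodType.

Lemma nbhs0_oppr (U : set V) : nbhs 0 U -> nbhs 0 (-%R @^-1` U).
Proof. by have := @opp_continuous V 0; rewrite /continuous_at oppr0; apply. Qed.

Lemma nbhs0_add (U : set V) : nbhs 0 U ->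
  exists2 N : set V, nbhs 0 N & forall a b, N a -> N b -> U (a + b).
Proof.
have := @add_continuous V (0, 0); rewrite /continuous_at /= addr0 => /[apply].
move=> [[P Q] /= [P0 Q0] PQU]; exists (P `&` Q); first exact: filterI.
by move=> a b [Pa _] [_ Qb]; apply: (PQU (a, b)).
Qed.

Lemma nbhs0_addB (U : set V) : nbhs 0 U ->
  exists2 N : set V, nbhs 0 N & forall a b, N a -> N b -> U (a + b) /\ U (a - b).
Proof.
move=> /nbhs0_add [N N0 NNU]; exists (N `&` -%R @^-1` N).
  by apply: filterI => //; apply: nbhs0_oppr.
by move=> a b [Na _] [Nb Nnb]; split; apply: NNU.
Qed.

End TopologicalZmodule.

Lemma cont_at_zero_unif_cont2 (R : realType) (V : topologicalLmodType R)
    (g : V -> V -> V) :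
  unif_cont2 g -> g 0 0 = 0 -> cont_at_zero g.
Proof.
move=> g_unif g00; rewrite /cont_at_zero /prop_for /continuous_at /= g00 => W /g_unif.
move=> [U [U0 UW]]; exists (U, U) => //= -[x y] /= [Ux Uy].
by have := UW x 0 y 0; rewrite !subr0 g00 subr0; apply.
Qed.

Section MixedLatticeTopology.
Variables (R : realType) (V : topologicalLmodType R) (le sle : V -> V -> Prop).
Variables (mj mm : V -> V -> V).
Hypothesis ml : mixed_lattice_vs le sle mj mm.

Let le_ovs : ordered_vs le. Proof. by case: ml => -[]. Qed.

Local Notation s := (ml_s mj).

Lemma ml_s_continuous0_symmetric_solid :
  locally_P (symmetric_solid le mj) -> {for 0, continuous s}.
Proof.
move=> ssV; rewrite /prop_for /continuous_at (ml_s0 ml) => U /ssV [W [W0 ssW WU]].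
by apply: filterS W0 => x Wx; apply: WU; apply: (symmetric_solid_ml_s ml ssW Wx).
Qed.

Lemma ml_s_continuous0_mj : cont_at_zero mj -> {for 0, continuous s}.
Proof.
move=> mj_cont.
have mjN_cont : mj z.1 z.2 @[z --> (0, - 0)] --> mj 0 (- 0) by rewrite oppr0.
have mj0_cont : mj 0 x @[x --> 0] --> mj 0 0.
  exact: (continuous2_cvg _ mj_cont (cvg_cst _) cvg_id).
have mj0N_cont : mj 0 (- x) @[x --> 0] --> mj 0 (- 0).
  exact: (continuous2_cvg _ mjN_cont (cvg_cst _) (@opp_continuous V 0)).
exact: (continuous2_cvg _ (add_continuous (_, _)) mj0_cont mj0N_cont).
Qed.

Lemma nbhs0_ml_s_preimage U : {for 0, continuous s} -> nbhs 0 U -> nbhs 0 (s @^-1` U).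
Proof. by rewrite /prop_for /continuous_at (ml_s0 ml); apply. Qed.

Lemma unif_cont2_increment_bounded g : locally_P (le_full le) ->
  {for 0, continuous s} -> ml_increment_bounded le mj g -> unif_cont2 g.
Proof.
move=> leF s_cont g_bd W /leF [F [F0 fullF FW]].
have [N N0 NNF] := nbhs0_addB F0.
have [M M0 MMN] := nbhs0_add N0.
exists (N `&` s @^-1` M); split; first by apply: filterI => //; apply: nbhs0_ml_s_preimage.
move=> x x' y y' [Nd Md] [_ Me]; have [Ft Ft'] := NNF _ _ Nd (MMN _ _ Md Me).
have -> : x = x' + (x - x') by rewrite addrC subrK.
have -> : y = y' + (y - y') by rewrite addrC subrK.
by apply/FW/(fullF _ _ _ Ft Ft'); [apply: (increment_lower_bound ml)|apply: g_bd].
Qed.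

Lemma locally_mixed_full_unif_mm : unif_cont2 mm -> locally_P (mixed_full le sle).
Proof.
move=> mm_unif U U0; have [N [N0 NU]] := mm_unif U U0.
pose W := [set x | (N `&` U) x \/ exists y, [/\ (N `&` U) y, sle 0 x & le x y]].
exists W; split.
- by apply: filterS (filterI N0 U0) => x; left.
- move=> x y [NUy | [z [NUz _ leyz]]] x_sge0 lexy; right; first by exists y.
  by exists z; split => //; apply: (ovs_trans le_ovs lexy).
- move=> x [[_] // | [y [[Ny _] x_sge0 lexy]]].
  have := NU x x y 0; rewrite subrr subr0 (mm_idl ml lexy) (mmx0 ml x_sge0) subr0.
  by apply => //; apply: nbhs_singleton.
Qed.

Lemma locally_le_full_symmetric_solid :
  locally_P (symmetric_solid le mj) -> locally_P (le_full le).
Proof.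
move=> ssV U /ssV [W [W0 ssW WU]].
have [N N0 NNW] := nbhs0_add W0.
have [A [A0 ssA AN]] := ssV N N0.
exists (le_full_hull le A); split.
- exact: filterS (@sub_le_full_hull _ _ _ le_ovs A) A0.
- exact: le_full_hull_le_full.
- apply: subset_trans WU; apply: (le_full_hull_sub ml ssA ssW).
  by move=> a b Aa Ab; apply: NNW; apply: AN.
Qed.

Lemma locally_symmetric_solid_le_full : locally_P (le_full le) ->
  {for 0, continuous s} -> locally_P (symmetric_solid le mj).
Proof.
move=> leF s_cont U /leF [F [F0 fullF FU]].
have [G [G0 fullG GF]] := leF _ (filterI F0 (nbhs0_oppr F0)).
exists (symmetric_solid_hull le mj (s @^-1` G)); split.
- apply: filterS (nbhs0_ml_s_preimage s_cont G0).
  exact: (@sub_symmetric_solid_hull _ _ _ _ _ _ ml).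
- exact: (symmetric_solid_hull_symmetric_solid ml).
- move=> y [x Gsx lesyx].
  have Gsy : G (s y) := fullG _ _ _ Gsx (nbhs_singleton G0) (ml_s_ge0 ml y) lesyx.
  have [Fsy FNsy] := GF _ Gsy.
  apply: FU; apply: (fullF _ _ _ Fsy FNsy); last exact: (ml_s_ge ml).
  by rewrite -[y in le _ y]opprK; apply: (ovs_opp le_ovs); apply: (ml_s_geN ml).
Qed.

End MixedLatticeTopology.

Theorem theorem3p12 (R : realType) (V : topologicalLmodType R)
    (le sle : V -> V -> Prop) (mj mm : V -> V -> V) :
  mixed_lattice_vs le sle mj mm ->
  let a := locally_P (symmetric_solid le mj) in
  let b := [/\ locally_P (le_full le), cont_at_zero mj & cont_at_zero mm] in
  let c := unif_cont2 mj /\ unif_cont2 mm in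
  let d := [/\ locally_P (mixed_full le sle), cont_at_zero mj & cont_at_zero mm] in
  [/\ (a <-> b), (a -> c), (b -> c) & (c -> d)].
Proof.
move=> ml a b c d.
have full_c : locally_P (le_full le) -> {for 0, continuous (ml_s mj)} -> c.
  move=> leF s_cont; split; apply: (unif_cont2_increment_bounded ml leF s_cont).
    exact: (mj_increment_bounded ml).
  exact: (mm_increment_bounded ml).
have ac : a -> c.
  move=> ssV; apply: full_c; first exact: locally_le_full_symmetric_solid ml ssV.
  exact: ml_s_continuous0_symmetric_solid ml ssV.
have bc : b -> c by case=> leF mj_cont _; exact: full_c leF (ml_s_continuous0_mj mj_cont).
have c_cont0 : c -> cont_at_zero mj /\ cont_at_zero mm.
  by case=> mj_unif mm_unif; split; apply: cont_at_zero_unif_cont2;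
    rewrite ?(mj00 ml) ?(mm00 ml).
split => //.
- split=> [ssV | [leF mj_cont _]].
    have [mj_cont mm_cont] := c_cont0 (ac ssV).
    by split => //; apply: (locally_le_full_symmetric_solid ml).
  exact: (locally_symmetric_solid_le_full ml leF (ml_s_continuous0_mj mj_cont)).
- move=> cc; have [mj_cont mm_cont] := c_cont0 cc.
  by split => //; apply: (locally_mixed_full_unif_mm ml cc.2).
Qed.
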